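(* Suppose a system $C=(1,c_2,c_3,c_4,c_5,c_6)$ is canonical and its subsystem $(1,c_2,c_3,c_4,c_5)$ is noncanonical. Then $c_6$ is equal to $2c_5-c_2$, $2c_5-c_3$, or $2c_5-c_4$.
   Context: A system is a tuple $C=(c_1,\dots,c_n)$ of integers with $1=c_1<c_2<\dots<c_n$; for $k\le n$, $(c_1,\dots,c_k)$ is a subsystem. For a positive integer $v$, $\mathrm{opt}_C(v)$ is the minimum of $\sum_i x_i$ over $x\in\mathbb{Z}_{\ge0}^n$ with $\sum_i c_ix_i=v$. The greedy representation of $v$ is produced by: for $i=n$ down to $1$, while $c_i\le$ remaining value, take a coin $c_i$. $\mathrm{grd}_C(v)$ is its number of coins. A positive integer $w$ is a counterexample if $\mathrm{opt}_C(w)<\mathrm{grd}_C(w)$; $C$ is canonical if it has none, noncanonical otherwise. *)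

From mathcomp Require Import all_boot.
Set Implicit Arguments. Unset Strict Implicit. Unset Printing Implicit Defensive.

Definition is_system (C : seq nat) : Prop :=
  head 0 C = 1 /\ sorted ltn C.

Definition value (C x : seq nat) : nat :=
  \sum_(i < size C) nth 0 C i * nth 0 x i.

Definition repr (C : seq nat) (v : nat) (x : seq nat) : Prop :=
  size x = size C /\ value C x = v.

Definition is_opt (C : seq nat) (v m : nat) : Prop :=
  (exists x, repr C v x /\ sumn x = m) /\
  (forall x, repr C v x -> m <= sumn x).

(* Greedy: process coins from largest to smallest, taking v %/ c copies
   of coin c (this is exactly "while c <= remaining, take c").
   grd_rev takes the coins in decreasing order. *)
Fixpoint grd_rev (cs : seq nat) (v : nat) : nat :=
  match cs with
  | [::] => 0
  | c :: cs' => v %/ c + grd_rev cs' (v %% c)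
  end.

Definition grd (C : seq nat) (v : nat) : nat := grd_rev (rev C) v.

Definition counterexample (C : seq nat) (w : nat) : Prop :=
  0 < w /\ exists m, is_opt C w m /\ m < grd C w.

Definition canonical (C : seq nat) : Prop :=
  forall w, ~ counterexample C w.

Definition noncanonical (C : seq nat) : Prop :=
  exists w, counterexample C w.

From mathcomp Require Import all_boot zify.
From Stdlib Require Import Classical.
Set Implicit Arguments. Unset Strict Implicit. Unset Printing Implicit Defensive.

(* If c6 >= c4 + c5, the subsystem would be canonical: below c6 its greedy
   agrees with that of C, and for v >= c6 strong induction applies, because
   removing a coin c <= c4 from a representation of v leaves v - c >= c5,
   whose greedy representation starts with c5; putting c back in its place
   gives a representation of v - c5 that is no worse.  Hence
   c5 < c6 < c4 + c5, and canonicity of C at 2 c5 = c6 + (2 c5 - c6) forces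
   grd(2 c5 - c6) <= 1: the value 2 c5 - c6 is a coin strictly between 1
   and c5. *)

Lemma sumn_incr_nth x i : sumn (incr_nth x i) = (sumn x).+1.
Proof.
elim: x i => [|n x IHx] [|i] //=; last by rewrite IHx addnS.
by rewrite -cat_nseq sumn_cat sumn_nseq.
Qed.

Lemma incr_nth_set_nth_pred x i :
  0 < nth 0 x i -> incr_nth (set_nth 0 x i (nth 0 x i).-1) i = x.
Proof.
move=> x_i_gt0; have lt_i_x : i < size x.
  by rewrite ltnNge; apply: contraTN x_i_gt0 => /(nth_default 0) ->.
apply: (@eq_from_nth _ 0) => [|j _].
  by rewrite size_incr_nth size_set_nth (maxn_idPr lt_i_x) lt_i_x.
rewrite nth_incr_nth nth_set_nth /=; case: eqP => [<-|/eqP].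
  by rewrite eqxx add1n prednK.
by rewrite eq_sym => /negbTE ->.
Qed.

Lemma is_system_mem1 C : is_system C -> 1 \in C.
Proof. by case: C => [|c C] [//= <-]; rewrite mem_head. Qed.

Lemma is_system_gt0 C c : is_system C -> c \in C -> 0 < c.
Proof.
case: C => [|c0 C] [//= <-] /(order_path_min ltn_trans)/allP C_gt1.
by rewrite in_cons => /predU1P[-> //|/C_gt1/ltnW].
Qed.

Lemma value_rcons C x c n :
  size x = size C -> value (rcons C c) (rcons x n) = value C x + c * n.
Proof.
move=> eq_size; rewrite /value size_rcons big_ord_recr /=.
rewrite !nth_rcons -eq_size ltnn eqxx; congr (_ + _).
by apply: eq_bigr => i _; rewrite !nth_rcons -eq_size ltn_ord.
Qed.

Lemma value_incr_nth C x i :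
  i < size C -> value C (incr_nth x i) = value C x + nth 0 C i.
Proof.
move=> lt_i_C; rewrite /value (bigD1 (Ordinal lt_i_C)) //.
rewrite [in RHS](bigD1 (Ordinal lt_i_C)) //=.
rewrite nth_incr_nth eqxx add1n mulnSr [LHS]addnAC; congr (_ + _ + _).
apply: eq_bigr => j ne_j_i; rewrite nth_incr_nth.
suff /negbTE -> : i != j by [].
by apply: contra ne_j_i => /eqP eq_ij; apply/eqP/val_inj.
Qed.

Lemma repr0 C : repr C 0 (nseq (size C) 0).
Proof.
split; first by rewrite size_nseq.
by rewrite /value big1 // => i _; rewrite nth_nseq if_same muln0.
Qed.

Lemma repr_rcons C c v x n :
  repr C v x -> repr (rcons C c) (v + c * n) (rcons x n).
Proof.
by move=> [eq_size <-]; split; [rewrite !size_rcons eq_size | exact: value_rcons].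
Qed.

Lemma repr_incr_nth C v x i :
  repr C v x -> i < size C -> repr C (v + nth 0 C i) (incr_nth x i).
Proof.
move=> [eq_size <-] lt_i_C; split; last exact: value_incr_nth.
by rewrite size_incr_nth eq_size lt_i_C.
Qed.

Lemma repr_decomp C v x : repr C v x -> 0 < v ->
  exists i u x',
    [/\ i < size C, v = u + nth 0 C i, x = incr_nth x' i & repr C u x'].
Proof.
move=> [eq_size val_x] v_gt0.
have [i x_i_gt0] : exists i : 'I_(size C), 0 < nth 0 x i.
  move: v_gt0; rewrite -val_x /value lt0n sum_nat_eq0 => /forallPn[i /= ne0].
  by exists i; rewrite lt0n; apply: contra ne0 => /eqP ->; rewrite muln0.
set x' := set_nth 0 x i (nth 0 x i).-1.
have def_x : x = incr_nth x' i by rewrite incr_nth_set_nth_pred.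
exists i, (value C x'), x'; split=> //.
- by rewrite -val_x {1}def_x value_incr_nth.
- by split=> //; rewrite size_set_nth eq_size (maxn_idPr (ltn_ord i)).
Qed.

Lemma is_opt_exists C v x : repr C v x -> exists m, is_opt C v m.
Proof.
move: {2}(sumn x) (leqnn (sumn x)) => k; elim: k x => [|k IHk] x le_x_k rx.
  by exists 0; split=> //; exists x; split=> //; apply/eqP; rewrite -leqn0.
have [[y le_y_k ry]|no_smaller] := classic (exists2 y, sumn y <= k & repr C v y).
  exact: IHk ry.
exists (sumn x); split=> [|y ry]; first by exists x.
by rewrite leqNgt; apply/negP => lt_y_x; apply: no_smaller; exists y; first lia.
Qed.

Lemma grd_rcons C c v : grd (rcons C c) v = v %/ c + grd C (v %% c).
Proof. by rewrite /grd rev_rcons. Qed.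

Lemma grd_rcons_small C c v : v < c -> grd (rcons C c) v = grd C v.
Proof. by move=> lt_v_c; rewrite grd_rcons divn_small // modn_small. Qed.

Lemma grd_rcons_sub C c v :
  0 < c -> c <= v -> grd (rcons C c) v = (grd (rcons C c) (v - c)).+1.
Proof.
move=> c_gt0 le_c_v; rewrite !grd_rcons -{1 2}(subnK le_c_v) modnDr.
by rewrite -{2}[c]mul1n divnDMl // addn1.
Qed.

Lemma grd_rev0 cs : grd_rev cs 0 = 0.
Proof. by elim: cs => //= c cs IHcs; rewrite div0n mod0n IHcs. Qed.

Lemma grd_rev_eq0 cs v : 1 \in cs -> (grd_rev cs v == 0) = (v == 0).
Proof.
elim: cs v => [//|c cs IHcs] v /=; rewrite in_cons addn_eq0 => /predU1P[<-|one_cs].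
  by rewrite divn1 modn1 grd_rev0 andbT.
rewrite IHcs //; apply/andP/eqP => [[/eqP q0 /eqP r0]|->]; last by rewrite div0n mod0n.
by rewrite (divn_eq v c) q0 r0.
Qed.

Lemma grd_rev_le1 cs v : 1 \in cs -> 0 < v -> grd_rev cs v <= 1 -> v \in cs.
Proof.
elim: cs v => [//|c cs IHcs] v /=; rewrite in_cons => /predU1P[<-|one_cs] v_gt0.
  rewrite divn1 modn1 grd_rev0 addn0 => le_v_1.
  by rewrite (_ : v = 1) ?mem_head; lia.
have [q0|q_gt0] := posnP (v %/ c).
  have mod_v : v %% c = v by rewrite {2}(divn_eq v c) q0.
  by rewrite q0 mod_v => /(IHcs _ one_cs v_gt0) v_cs; rewrite in_cons v_cs orbT.
move=> le_1; have : grd_rev cs (v %% c) == 0 by lia.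
rewrite grd_rev_eq0 // => /eqP r0.
suff -> : v = c by rewrite mem_head.
have q1 : v %/ c = 1 by lia.
by rewrite (divn_eq v c) r0 q1 mul1n addn0.
Qed.

Lemma grd_le1_mem C v : 1 \in C -> 0 < v -> grd C v <= 1 -> v \in C.
Proof.
by rewrite -mem_rev => one_C v_gt0 /(grd_rev_le1 one_C v_gt0); rewrite mem_rev.
Qed.

Lemma grd_repr C v : 1 \in C -> exists2 x, repr C v x & sumn x = grd C v.
Proof.
elim/last_ind: C v => [//|C c IHC] v; rewrite mem_rcons in_cons.
case/predU1P=> [<-|one_C].
  exists (rcons (nseq (size C) 0) v); last first.
    rewrite sumn_rcons sumn_nseq grd_rcons divn1 modn1 /grd grd_rev0.
    by rewrite mul0n add0n addn0.
  by have := repr_rcons 1 v (repr0 C); rewrite mul1n.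
have [x rx sum_x] := IHC (v %% c) one_C.
exists (rcons x (v %/ c)); last by rewrite sumn_rcons sum_x grd_rcons addnC.
by rewrite {1}(divn_eq v c) addnC mulnC; apply: repr_rcons.
Qed.

Lemma canonical_iff_grd_le C :
  canonical C <-> forall v x, repr C v x -> grd C v <= sumn x.
Proof.
split=> [can v x rx|grd_le w [_ [m [[[x [rx <-]] _] lt_m]]]]; last first.
  by have := grd_le w x rx; rewrite leqNgt lt_m.
have [->|v_gt0] := posnP v; first by rewrite /grd grd_rev0.
have [m opt_m] := is_opt_exists rx.
rewrite leqNgt; apply/negP => lt_x; apply: (can v); split=> //.
by exists m; split=> //; apply: leq_ltn_trans lt_x; apply: opt_m.2.
Qed.

Lemma canonical_grd_add_coins C a b :
  canonical C -> a \in C -> b \in C -> grd C (a + b) <= 2.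
Proof.
move=> /canonical_iff_grd_le grd_le Ca Cb.
have ia : index a C < size C by rewrite index_mem.
have ib : index b C < size C by rewrite index_mem.
have := grd_le _ _ (repr_incr_nth (repr_incr_nth (repr0 C) ia) ib).
by rewrite !nth_index // add0n !sumn_incr_nth sumn_nseq.
Qed.

Lemma canonical_of_rcons_large B d e :
  is_system (rcons B d) -> (forall c, c \in B -> c + d <= e) ->
  canonical (rcons (rcons B d) e) -> canonical (rcons B d).
Proof.
move=> sysC gap /canonical_iff_grd_le grd_le_ext.
have d_gt0 : 0 < d by apply: is_system_gt0 sysC _; rewrite mem_rcons mem_head.
apply/canonical_iff_grd_le => v; elim/ltn_ind: v => v IHv x rx.
have [lt_v_e|le_e_v] := ltnP v e.
  rewrite -(grd_rcons_small _ lt_v_e); have := repr_rcons e 0 rx.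
  by rewrite muln0 addn0 => /grd_le_ext; rewrite sumn_rcons addn0.
have [->|v_gt0] := posnP v; first by rewrite /grd grd_rev0.
have [i [u [x' [lt_i_C def_v -> rx']]]] := repr_decomp rx v_gt0.
have [le_d_v [y ry le_y_x']] :
    d <= v /\ exists2 y, repr (rcons B d) (v - d) y & sumn y <= sumn x'.
  move: lt_i_C def_v; rewrite nth_rcons size_rcons ltnS leq_eqVlt.
  case/predU1P=> [-> | lt_i_B]; rewrite ?ltnn ?eqxx => def_v.
    by split; [rewrite def_v leq_addl | exists x'; rewrite // def_v addnK].
  move: def_v; rewrite lt_i_B; set c := nth 0 B i => def_v.
  have Bc : c \in B := mem_nth 0 lt_i_B.
  have c_gt0 : 0 < c.
    by apply: is_system_gt0 sysC _; rewrite mem_rcons in_cons Bc orbT.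
  have le_d_u : d <= u by have := gap c Bc; lia.
  split; first lia.
  have [g rg sum_g] := grd_repr (u - d) (is_system_mem1 sysC).
  have lt_i_C : i < size (rcons B d) by rewrite size_rcons ltnS ltnW.
  exists (incr_nth g i).
    have := repr_incr_nth rg lt_i_C; rewrite nth_rcons lt_i_B -/c.
    by rewrite (_ : u - d + c = v - d) //; lia.
  by rewrite sumn_incr_nth sum_g -grd_rcons_sub //; apply: IHv rx'; lia.
rewrite sumn_incr_nth grd_rcons_sub // ltnS.
by apply: leq_trans le_y_x'; apply: IHv ry; lia.
Qed.

Lemma canonical_rcons_double_mem C d e :
  is_system C -> d \in C -> d < e < d + d ->
  canonical (rcons C e) -> d + d - e \in C.
Proof.
move=> sysC Cd /andP[lt_d_e lt_e_dd] can.
have Cd' : d \in rcons C e by rewrite mem_rcons in_cons Cd orbT.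
have := canonical_grd_add_coins can Cd' Cd'.
rewrite grd_rcons_sub ?grd_rcons_small; try lia.
by move=> le_1; apply: grd_le1_mem; [exact: is_system_mem1 sysC | lia | lia].
Qed.

Theorem lemma5 (c2 c3 c4 c5 c6 : nat) :
  is_system [:: 1; c2; c3; c4; c5; c6] ->
  canonical [:: 1; c2; c3; c4; c5; c6] ->
  noncanonical [:: 1; c2; c3; c4; c5] ->
  c6 = 2 * c5 - c2 \/ c6 = 2 * c5 - c3 \/ c6 = 2 * c5 - c4.
Proof.
move=> sysC can [w ce].
have [_ /and5P[lt_1_2 lt_2_3 lt_3_4 lt_4_5 /andP[lt_5_6 _]]] := sysC.
have sysC5 : is_system [:: 1; c2; c3; c4; c5].
  by split=> //=; apply/and5P.
have lt_6_45 : c6 < c4 + c5.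
  rewrite ltnNge; apply/negP => le_45_6.
  apply: (canonical_of_rcons_large (B := [:: 1; c2; c3; c4]) sysC5 _ can) ce.
  by move=> c; rewrite !inE; lia.
have mem_C5 : c5 + c5 - c6 \in [:: 1; c2; c3; c4; c5].
  apply: (canonical_rcons_double_mem (e := c6) sysC5) can.
    by rewrite !inE eqxx !orbT.
  by lia.
by move: mem_C5; rewrite !inE; lia.
Qed.
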